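(* Let $G$ be a finite group with a cyclic maximal subgroup. Then $G$ is solvable and $G''\leq Z(G)$.
   Context: $G''=[G',G']$ is the second derived subgroup and $Z(G)$ is the center of $G$. *)

From mathcomp Require Import all_boot all_order all_fingroup all_solvable.

From mathcomp Require Import all_boot all_order all_fingroup all_solvable.
From mathcomp Require Import all_character.
Set Implicit Arguments.
Unset Strict Implicit.
Unset Printing Implicit Defensive.
Local Open Scope group_scope.

(* If the cyclic maximal subgroup M is normal, then G / M has prime order, so
   G' lies in the abelian group M.  Otherwise M is self-normalizing, and M
   together with any other conjugate M^g generates G; as subgroups of cyclic
   groups are characteristic, M :&: M^g is normal in G, hence lies in the core
   K of M.  So M / K is a TI maximal subgroup of G / K, i.e. a Frobenius
   complement.  By maximality the kernel has no proper nontrivial M-invariant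
   subgroup: it is then an M-invariant Sylow subgroup, and equals its own
   center, so (G / K)'' = 1.  Finally 'C_G(K) contains M and is normal, hence
   equals G, so G'' <= K <= Z(G); in particular G''' = 1. *)

Lemma der_sub_abelian_trivial (gT : finGroupType) (G A : {group gT}) n :
  G^`(n) \subset A -> abelian A -> G^`(n.+1) = 1.
Proof.
move=> sGnA /derG1P cAA; apply/trivgP.
by rewrite /= dergSn -cAA derg1 commgSS.
Qed.

Section MaximalSubgroup.

Variables (gT : finGroupType) (G M : {group gT}).
Hypothesis maxM : maximal M G.

Lemma maximal_intermediate (H : {group gT}) :
  M \subset H -> H \subset G -> H :=: M \/ H :=: G.
Proof.
case/maxgroupP: maxM => _ maxMG sMH sHG.
have [-> | neHG] := eqVneq H G; first by right.
by left; apply: maxMG; rewrite // properEneq neHG.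
Qed.

Lemma maximal_normal_der1_sub : M <| G -> G^`(1) \subset M.
Proof.
move=> nsMG; have [_ [x Gx notMx]] := properP (maxgroupp maxM).
have defG : M * <[x]> = G.
  by apply: mulg_normal_maximal; rewrite ?cycle_subG.
apply: der1_min (normal_norm nsMG) _.
by rewrite -defG quotientMidl quotient_abelian ?cycle_abelian.
Qed.

Lemma maximal_self_normalizing : ~~ (G \subset 'N(M)) -> 'N_G(M) = M.
Proof.
move=> nnMG; have sMN : M \subset 'N_G(M).
  by rewrite subsetI (proper_sub (maxgroupp maxM)) normG.
case: (maximal_intermediate sMN (subsetIl _ _)) => // defN.
by case/negP: nnMG; rewrite -defN subsetIr.
Qed.

Lemma maximal_core_sub_center :
  abelian M -> ~~ (G \subset 'N(M)) -> gcore M G \subset 'Z(G).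
Proof.
move=> cMM nnMG; set K := gcore M G.
have sMG := proper_sub (maxgroupp maxM).
have nsKG : K <| G := gcore_normal sMG.
have sMC : M \subset 'C_G(K).
  by rewrite subsetI sMG sub_abelian_cent ?gcore_sub.
case: (maximal_intermediate sMC (subsetIl _ _)) => [defC | defC].
  case/negP: nnMG; have := subcent_normal G K.
  by rewrite (setIidPl (normal_norm nsKG)) defC => /andP[].
by rewrite subsetI normal_sub //= centsC -defC subsetIr.
Qed.

Lemma cyclic_maximal_meet_conj_sub_core g :
  cyclic M -> ~~ (G \subset 'N(M)) -> g \in G -> g \notin M ->
  M :&: M :^ g \subset gcore M G.
Proof.
move=> cycM nnMG Gg notMg.
have sMG := proper_sub (maxgroupp maxM).
rewrite sub_gcore ?subsetIl //.
have sMgG : M :^ g \subset G by rewrite sub_conjg conjGid ?groupV.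
have sMJ : M \subset M <*> (M :^ g)%G by apply: joing_subl.
have sJG : M <*> (M :^ g)%G \subset G by rewrite join_subG sMG.
case: (maximal_intermediate sMJ sJG) => [defJ | <-].
  case/negP: notMg; rewrite -(maximal_self_normalizing nnMG) inE Gg.
  apply/normP/eqP; rewrite eqEcard cardJg leqnn andbT.
  by rewrite -{2}defJ joing_subr.
have chM : (M :&: M :^ g)%G \char M by rewrite sub_cyclic_char // subsetIl.
have chMg : (M :&: M :^ g)%G \char (M :^ g)%G.
  by rewrite sub_cyclic_char ?cyclicJ // subsetIr.
by rewrite join_subG (char_norm chM) (char_norm chMg).
Qed.

End MaximalSubgroup.

Lemma maximal_TI_Frobenius (gT : finGroupType) (G M : {group gT}) :
  maximal M G -> M :!=: 1 ->
  (forall g, g \in G -> g \notin M -> M :&: M :^ g \subset [1 gT]) ->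
  [Frobenius G with complement M].
Proof.
move=> maxM ntM tiM; have prMG := maxgroupp maxM.
apply/andP; split; first by rewrite proper_neq.
apply/normedTI_P; split.
- by rewrite setD_eq0 subG1.
- by rewrite subsetI (proper_sub prMG) normD1 normG.
move=> g Gg; apply: contraR => notMg.
by rewrite -setI_eq0 conjD1g -setDIl setD_eq0 tiM.
Qed.

Section FrobeniusMaximalComplement.

Variables (gT : finGroupType) (G N M : {group gT}).
Hypotheses (frobG : [Frobenius G = N ><| M]) (maxM : maximal M G).

Lemma Frobenius_maximal_kernel_minimal (X : {group gT}) :
  X \subset N -> M \subset 'N(X) -> X :!=: 1 -> X :=: N.
Proof.
move=> sXN nXM ntX; have [defG _ _ _ _] := Frobenius_context frobG.
have [_ defNM _ tiNM] := sdprodP defG.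
have sNG : N \subset G by have /mulG_sub[] := defNM.
have tiMX : M :&: X = 1 by apply/trivgP; rewrite -tiNM setIC setIS.
have sMJ : M \subset M <*> X by apply: joing_subl.
have sJG : M <*> X \subset G.
  by rewrite join_subG (proper_sub (maxgroupp maxM)) (subset_trans sXN).
case: (maximal_intermediate maxM sMJ sJG) => [defJ | defJ].
  by case/negP: ntX; rewrite -subG1 -tiNM subsetI sXN -defJ joing_subr.
apply/eqP; rewrite eqEcard sXN /=.
have := sdprod_card defG; rewrite -defJ /= (norm_joinEl nXM) (TI_cardMg tiMX).
by rewrite mulnC => /eqP; rewrite eqn_pmul2l ?cardG_gt0 // => /eqP ->.
Qed.

Lemma Frobenius_maximal_kernel_abelian : solvable M -> abelian N.
Proof.
move=> solM; have [defG ntN _ _ _] := Frobenius_context frobG.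
have [_ _ nNM _] := sdprodP defG.
pose p := pdiv #|N|.
have [P sylP nPM] :=
  sol_coprime_Sylow_exists p solM nNM (Frobenius_coprime frobG).
have ntP : P :!=: 1.
  by rewrite -cardG_gt1 (card_Hall sylP) p_part_gt1 pi_pdiv cardG_gt1.
have defP := Frobenius_maximal_kernel_minimal (pHall_sub sylP) nPM ntP.
have pN : p.-group N by rewrite -defP (pHall_pgroup sylP).
have ntZ : 'Z(N) :!=: 1.
  by apply: contraNneq ntN => Z1; rewrite (trivg_center_pgroup pN Z1).
have nZM := char_norm_trans (center_char N) nNM.
by apply/center_idP; apply: Frobenius_maximal_kernel_minimal (center_sub N) _ _.
Qed.

End FrobeniusMaximalComplement.

Lemma Frobenius_maximal_abelian_complement_der2 (gT : finGroupType)
    (G M : {group gT}) :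
  [Frobenius G with complement M] -> maximal M G -> abelian M -> G^`(2) = 1.
Proof.
move=> frobGM maxM cMM; have [N frobG] := Frobenius_kernel_exists frobGM.
have [defG _ _ _ _] := Frobenius_context frobG.
have [_ defNM nNM _] := sdprodP defG.
have cNN := Frobenius_maximal_kernel_abelian frobG maxM (abelian_sol cMM).
have nNG : G \subset 'N(N) by rewrite -defNM mul_subG ?normG.
have sG'N : G^`(1) \subset N.
  by apply: der1_min nNG _; rewrite -defNM quotientMidl quotient_abelian.
exact: der_sub_abelian_trivial sG'N cNN.
Qed.

Lemma cyclic_maximal_der2_sub_core (gT : finGroupType) (G M : {group gT}) :
  maximal M G -> cyclic M -> ~~ (G \subset 'N(M)) ->
  G^`(2) \subset gcore M G.
Proof.
move=> maxM cycM nnMG; set K := gcore M G.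
have sMG := proper_sub (maxgroupp maxM).
have nsKG : K <| G := gcore_normal sMG.
have sKM : K \subset M := gcore_sub M G.
have nKG := normal_norm nsKG.
have nsKM : K <| M := normalS sKM sMG nsKG.
have nKM := normal_norm nsKM.
have maxMK : maximal (M / K) (G / K) by rewrite quotient_maximal.
have ntMK : M / K != 1.
  apply: contra nnMG; rewrite -subG1 quotient_sub1 // => sMK.
  have defK : K :=: M by apply/eqP; rewrite eqEsubset sKM.
  by rewrite -defK.
have tiMK : forall xb, xb \in G / K -> xb \notin M / K ->
    M / K :&: (M / K) :^ xb \subset [1 _].
  move=> _ /morphimP[x Nx Gx ->] notMKx.
  have notMx : x \notin M by apply: contra notMKx; apply: mem_quotient.
  rewrite -quotientJ // -quotientGI // quotientS1 //.
  exact: cyclic_maximal_meet_conj_sub_core.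
have frobGK := maximal_TI_Frobenius maxMK ntMK tiMK.
rewrite -(quotient_sub1 (subset_trans (der_sub 2 G) nKG)) quotient_der //.
by rewrite (Frobenius_maximal_abelian_complement_der2 frobGK) ?quotient_abelian
  ?cyclic_abelian.
Qed.

Theorem proposition2p4 (gT : finGroupType) (G M : {group gT}) :
  maximal M G -> cyclic M -> solvable G /\ G^`(2) \subset 'Z(G).
Proof.
move=> maxM cycM; have cMM := cyclic_abelian cycM.
suff sG2Z : G^`(2) \subset 'Z(G).
  split=> //; apply/derivedP; exists 3.
  exact: der_sub_abelian_trivial sG2Z (center_abelian G).
have [nMG | nnMG] := boolP (G \subset 'N(M)).
  have nsMG : M <| G by rewrite /normal (proper_sub (maxgroupp maxM)).
  have sG'M := maximal_normal_der1_sub maxM nsMG.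
  by rewrite (der_sub_abelian_trivial sG'M cMM) sub1G.
apply: subset_trans (cyclic_maximal_der2_sub_core maxM cycM nnMG) _.
exact: maximal_core_sub_center.
Qed.
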